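(* Let $g\ge1$ and let $\mathcal M_{2g+1}$, $V^{(2g+1)}$, the $\mathrm{CS}_2$ flows $\partial/\partial t_j$, $\mathcal M_A$, $\widetilde{\mathcal S}$, $E$ and $\widetilde{\mathcal Q}$ be as in the context. For $i=0,\dots,g-1$ consider the vector field on $\mathcal M_A$ $$\frac{dX(\lambda)}{dt}=\big[(\lambda^{i-g}X(\lambda))_+,X(\lambda)\big],$$ which is tangent to $\widetilde{\mathcal S}$. Then its projection onto $T\widetilde{\mathcal Q}$ along $E$ (according to the splitting $T\widetilde{\mathcal S}=T\widetilde{\mathcal Q}\oplus E$ at points of $\widetilde{\mathcal Q}$) coincides, under the identification of $\mathcal M_{2g+1}$ with $\widetilde{\mathcal Q}$ via $h\mapsto V^{(2g+1)}(h)$, with the $\mathrm{KdV}_{2g+1}$ flow, i.e. with the restriction to $\mathcal M_{2g+1}$ of the $\mathrm{CS}_2$ flow $\partial/\partial t_{2i+1}$. Equivalently, the projections of these vector fields to the quotient $\widetilde{\mathcal N}=\widetilde{\mathcal S}/E$ coincide with the $\mathrm{KdV}_{2g+1}$ systems.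
   Context: Given a formal Laurent series $h=z+\sum_{l\ge1}h_lz^{-l}$, put $\lambda=z^2$ and define $H^{(0)}=1$, $H^{(1)}=h$, $H^{(2)}=z^2$, $H^{(k+2)}=z^2H^{(k)}-H^k_1h-H^k_2$ ($k\ge1$), where $H^k_l$ is the coefficient of $z^{-l}$ in $H^{(k)}$ (so $H^1_l=h_l$). Each $H^{(k)}$ and each series $H^{(j+1)}+\sum_{l=1}^jh_lH^{(j-l)}+H^j_1$ can be written uniquely as $a(\lambda)+b(\lambda)h$ with $a,b$ polynomials. $V^{(j)}$ is the $2\times2$ polynomial matrix with first row $(p_j,q_j)$ where $H^{(j)}=p_j+q_jh$, and second row $(a_j,b_j)$ where $H^{(j+1)}+\sum_{l=1}^jh_lH^{(j-l)}+H^j_1=a_j+b_jh$. The $\mathrm{CS}_2$ flows are $\partial h/\partial t_j=-hH^{(j)}+H^{(j+1)}+\sum_{l=1}^jh_lH^{(j-l)}+H^j_1$; they commute. $\mathcal M_{2g+1}$ is the set of $h$ with $\partial h/\partial t_{2g+1}=0$; it is invariant under all $\mathrm{CS}_2$ flows, coordinatized by $(h_1,\dots,h_{2g+1})$, and the restricted flows form the $\mathrm{KdV}_{2g+1}$ system (the stationary reductions of KdV). $\mathcal M_A=\{X(\lambda)=\lambda^{g+1}A+\sum_{i=0}^g\lambda^iX_i\mid X_i\in\mathfrak{sl}(2)\}$ with $A=\begin{pmatrix}0&0\\1&0\end{pmatrix}$; $H_i$ is the coefficient of $\lambda^i$ in $\tfrac12\mathrm{Tr}\,X(\lambda)^2$;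 $\widetilde{\mathcal S}$ is the submanifold $H_{2g+1}=1$, $H_i=0$ for $g+1\le i\le2g$; $E$ is the rank-one distribution on $\widetilde{\mathcal S}$ spanned by $\dot X(\lambda)=[A,X(\lambda)]$; $\widetilde{\mathcal Q}\subset\widetilde{\mathcal S}$ is the image of $h\mapsto V^{(2g+1)}(h)$ on $\mathcal M_{2g+1}$, which lies in $\widetilde{\mathcal S}$, is injective, and is transversal to $E$. $(\cdot)_+$ denotes projection onto nonnegative powers of $\lambda$. *)

From HB Require Import structures.
From mathcomp Require Import all_boot all_order all_algebra.
Set Implicit Arguments. Unset Strict Implicit. Unset Printing Implicit Defensive.
Import Order.TTheory GRing.Theory Num.Theory.
Local Open Scope ring_scope.

(* Formal Laurent series in z with finitely many positive powers, represented
   by their coefficient function: S n = coefficient of z^n.  All series below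
   have (explicitly known) upper degree bounds. *)
Definition lser (R : Type) := int -> R.

Definition natp (x : int) : nat := match x with Posz k => k | Negz _ => 0%N end.

Section Series.
Variable R : comNzRingType.

Definition lconst (c : R) : lser R := fun n => if n == 0 then c else 0.

Definition lshift (m : int) (S : lser R) : lser R := fun n => S (n - m).

(* product of two series with degree bounds dS, dT (i.e. S n = 0 for n > dS,
   T n = 0 for n > dT): coefficient of z^n is sum_{m = n-dT}^{dS} S_m T_{n-m} *)
Definition lmul (dS dT : int) (S T : lser R) : lser R :=
  fun n => \sum_(k < natp (dS + dT - n + 1)) S (dS - k%:Z) * T (n - dS + k%:Z).

(* h = z + sum_{l>=1} h_l z^{-l}; the sequence h : nat -> R gives h_l = h l
   for l >= 1 (h 0 is unused). *)
Definition hser (h : nat -> R) : lser R :=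
  fun n => if n == 1 then 1 else match n with Negz k => h k.+1 | _ => 0 end.

(* H^(k): H^(0) = 1, H^(1) = h, H^(2) = z^2,
   H^(k+2) = z^2 H^(k) - H^k_1 h - H^k_2  (k >= 1).  deg H^(k) <= k. *)
Definition Hstep (h : nat -> R) (A : lser R) : lser R :=
  fun n => A (n - 2) - A (- 1) * hser h n - A (- 2) * lconst 1 n.

Fixpoint Hpair (h : nat -> R) (k : nat) : lser R * lser R :=
  match k with
  | 0%N => (lconst 1, hser h)
  | k'.+1 => let p := Hpair h k' in
             if k' == 0%N then (hser h, lshift 2 (lconst 1))
             else (p.2, Hstep h p.1)
  end.

Definition Hser (h : nat -> R) (k : nat) : lser R := (Hpair h k).1.

Definition Hc (h : nat -> R) (k l : nat) : R := Hser h k (- (l%:Z)).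

Definition Sser (h : nat -> R) (j : nat) : lser R :=
  fun n => Hser h j.+1 n + \sum_(1 <= l < j.+1) h l * Hser h (j - l) n
           + Hc h j 1 * lconst 1 n.

Definition flow (h : nat -> R) (j : nat) : lser R :=
  fun n => - lmul 1 j%:Z (hser h) (Hser h j) n + Sser h j n.

(* the flow as a tangent vector in the coordinates h_l: component l is the
   coefficient of z^{-l} (l >= 1; component 0 is irrelevant) *)
Definition flowv (h : nat -> R) (j : nat) : nat -> R :=
  fun l => flow h j (- (l%:Z)).

Definition inM (g : nat) (h : nat -> R) : Prop :=
  forall n : int, flow h (2 * g + 1) n = 0.

(* Writing a series S of degree <= d as a(lambda) + b(lambda) h, lambda = z^2:
   the (unique) polynomials a, b are read off from the nonnegative part of S,
   peeling the leading power z^k (k = d, ..., 0): an even power z^{2m} goes to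
   a as lambda^m, an odd power z^{2m+1} goes to b as lambda^m (since
   lambda^m h = z^{2m+1} + lower). *)
Fixpoint dec_aux (h : nat -> R) (k : nat) (S : lser R) : {poly R} * {poly R} :=
  match k with
  | 0%N => ((S 0)%:P, 0)
  | k'.+1 =>
    let c := S (k'.+1)%:Z in
    let m := (k'.+1)./2 in
    if odd k'.+1 then
      let ab := dec_aux h k' (fun n => S n - c * hser h (n - (2 * m)%N%:Z)) in
      (ab.1, ab.2 + c *: 'X^m)
    else
      let ab := dec_aux h k' (fun n => S n - c * lconst 1 (n - (2 * m)%N%:Z)) in
      (ab.1 + c *: 'X^m, ab.2)
  end.

Definition decomp (h : nat -> R) (d : nat) (S : lser R) := dec_aux h d S.

(* V^(j): first row (p_j, q_j) with H^(j) = p_j + q_j h,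
          second row (a_j, b_j) with S_j = a_j + b_j h. *)
Definition Vmx (h : nat -> R) (j : nat) : 'M[{poly R}]_2 :=
  let pq := decomp h j (Hser h j) in
  let ab := decomp h j.+1 (Sser h j) in
  \matrix_(r < 2, s < 2)
    if (r == 0 :> nat) then (if (s == 0 :> nat) then pq.1 else pq.2)
    else (if (s == 0 :> nat) then ab.1 else ab.2).

End Series.

Section Tangent.
Variable R : comNzRingType.

(* h + eps w, with coefficients in R[eps] (= {poly R}) *)
Definition dualseq (h w : nat -> R) : nat -> {poly R} :=
  fun l => (h l)%:P + (w l)%:P * 'X.

(* differential of h |-> V^(j)(h) at h in direction w: the eps-linear part of
   V^(j)(h + eps w) *)
Definition dVmx (h w : nat -> R) (j : nat) : 'M[{poly R}]_2 :=
  map_mx (map_poly (fun p : {poly R} => p`_1)) (Vmx (dualseq h w) j).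

Definition mcomm (P Q : 'M[{poly R}]_2) : 'M[{poly R}]_2 := P *m Q - Q *m P.

Definition Amx : 'M[{poly R}]_2 :=
  \matrix_(r < 2, s < 2) ((r == 1 :> nat) && (s == 0 :> nat))%:R.

(* (lambda^{-k} X(lambda))_+ *)
Definition pluspart (k : nat) (X : 'M[{poly R}]_2) : 'M[{poly R}]_2 :=
  map_mx (drop_poly k) X.

End Tangent.

(* The rows of [V^(J)] are the coefficient pairs of [H^(J) = p + q h] and
   [S_J = a + b h]; as [a + b h] is determined by its coefficients of nonnegative
   index, so is a matrix by the corresponding coefficients of its two row series.
   Truncating [lambda^(i-g) V^(2g+1)] shifts these coefficients by [2(g-i)], which
   reproduces [V^(2i+1)] up to a multiple [c A] of [A].  On [M_(2g+1)], where
   [h H^(2g+1) = S_(2g+1)], the Lax equation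
   [d V^(2g+1) / d t_(2i+1) = [V^(2i+1), V^(2g+1)]] holds: differentiating the rows
   over the dual numbers [R[eps]], the rows of the difference become [dH] and
   [h dH + d(flow)], series without nonnegative coefficients.  Hence the vector
   field equals the KdV flow plus [c [A, V^(2g+1)]], a vector along [E]. *)

From Pilot Require Import Defs.
From mathcomp Require Import all_boot all_order all_algebra.
From mathcomp Require Import zify ring.
Import Order.TTheory GRing.Theory Num.Theory.
Set Implicit Arguments. Unset Strict Implicit. Unset Printing Implicit Defensive.
Local Open Scope ring_scope.

Lemma natpK (x : int) : 0 <= x -> (natp x)%:Z = x.
Proof. by case: x. Qed.

Lemma natp_le0 (x : int) : x <= 0 -> natp x = 0%N.
Proof. by case: x => // -[]. Qed.

Lemma natp_ge (x : int) (k : nat) : (natp x <= k)%N -> x <= k.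
Proof. by case: x => //= m; rewrite lez_nat. Qed.

Lemma natp_le (x : int) (k : nat) : x <= k -> (natp x <= k)%N.
Proof. by case: x => //= m; rewrite lez_nat. Qed.

Lemma natp_eq (x : int) (m : nat) : x = m%:Z -> natp x = m.
Proof. by move->. Qed.

Lemma int_of_nonneg (n : int) : 0 <= n -> exists N : nat, n = N%:Z.
Proof. by move=> n_ge0; exists (natp n); rewrite natpK. Qed.

Lemma natr_false (R : nzSemiRingType) (b : bool) : ~~ b -> b%:R = 0 :> R.
Proof. by case: b. Qed.

Section SeriesProduct.
Variable R : comNzRingType.
Implicit Types (S T U : lser R) (d e f : int).

Definition deg_le d S := forall n : int, d < n -> S n = 0.

Lemma deg_leW d d' S : d <= d' -> deg_le d S -> deg_le d' S.
Proof. by move=> dd' Sd n d'n; apply: Sd; lia. Qed.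

Lemma deg_le_nat (k : nat) S : (forall N : nat, (k < N)%N -> S N = 0) -> deg_le k S.
Proof.
move=> S0 n n_gt; have [N nE] : exists N : nat, n = N by apply: int_of_nonneg; lia.
by rewrite nE S0 //; lia.
Qed.

Lemma lconst1_deg : deg_le 0 (lconst (1 : R)).
Proof. by move=> n n_gt; rewrite /lconst ifF //; lia. Qed.

Lemma lmulE d e S T n :
  lmul d e S T n = \sum_(0 <= k < natp (d + e - n + 1)) S (d - k%:Z) * T (n - d + k%:Z).
Proof. by rewrite /lmul big_mkord. Qed.

Lemma lmul_deg d e S T : deg_le (d + e) (lmul d e S T).
Proof. by move=> n n_gt; rewrite /lmul natp_le0 ?big_ord0 //; lia. Qed.

Lemma eq_lmul d e S S' T T' : S =1 S' -> T =1 T' -> lmul d e S T =1 lmul d e S' T'.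
Proof. by move=> eS eT n; apply: eq_bigr => k _; rewrite eS eT. Qed.

Lemma lmulC d e S T n : lmul d e S T n = lmul e d T S n.
Proof.
rewrite /lmul; case: (lerP 0 (d + e - n + 1)) => n_le; last first.
  by rewrite !natp_le0 ?big_ord0 //; lia.
have -> : e + d - n + 1 = d + e - n + 1 by lia.
have := natpK n_le; set N := natp _ => NE.
rewrite (reindex_inj rev_ord_inj); apply: eq_bigr => k _ /=.
by have kN := ltn_ord k; rewrite mulrC; congr (T _ * S _); lia.
Qed.

(* The degree bound [d] of [lmul] only fixes where the summation starts;
   any valid bound gives the same product. *)
Lemma lmulSl d e S T : deg_le d S -> lmul (d + 1) e S T =1 lmul d e S T.
Proof.
move=> Sd n; rewrite /lmul; case: (lerP 0 (d + e - n + 1)) => n_le; last first.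
  by rewrite !natp_le0 ?big_ord0 //; lia.
have := natpK n_le; set N := natp _ => NE.
rewrite (@natp_eq _ N.+1); last lia.
rewrite big_ord_recl Sd ?mul0r ?add0r; last by rewrite subr0; lia.
by apply: eq_bigr => k _; rewrite lift0; congr (S _ * T _); lia.
Qed.

Lemma lmul_degl d d' e S T : deg_le d S -> deg_le d' S -> lmul d e S T =1 lmul d' e S T.
Proof.
wlog dd' : d d' / d <= d'.
  move=> wlog_le Sd Sd' n; case: (lerP d d') => dd'; first exact: wlog_le.
  by rewrite (wlog_le d' d) // ltW.
move=> Sd _ n; have [k ->] : exists k : nat, d' = d + k%:Z.
  by exists (natp (d' - d)); rewrite natpK; lia.
elim: k => [|k IH]; first by rewrite addr0.
have -> : d + k.+1%:Z = (d + k%:Z) + 1 by lia.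
rewrite lmulSl //; apply: deg_leW Sd; lia.
Qed.

Lemma lmulDl d e S S' T n :
  lmul d e (fun m => S m + S' m) T n = lmul d e S T n + lmul d e S' T n.
Proof. by rewrite /lmul -big_split; apply: eq_bigr => k _; rewrite mulrDl. Qed.

Lemma lmulZl d e c S T n : lmul d e (fun m => c * S m) T n = c * lmul d e S T n.
Proof. by rewrite /lmul mulr_sumr; apply: eq_bigr => k _; rewrite mulrA. Qed.

Lemma lmul0l d e T n : lmul d e (fun _ => 0) T n = 0.
Proof. by rewrite /lmul big1 // => k _; rewrite mul0r. Qed.

Lemma lmul1l e T : deg_le e T -> lmul 0 e (lconst 1) T =1 T.
Proof.
move=> Te n; rewrite lmulE; case: (lerP 0 (0 + e - n + 1)) => n_le; last first.
  by rewrite natp_le0 ?big_geq ?Te //; lia.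
case NE: (natp _) (natpK n_le) => [|N] NE'; first by rewrite big_geq ?Te //; lia.
rewrite big_ltn // big_nat_cond big1 => [|k /andP[/andP[k_gt0 _] _]]; last first.
  by rewrite /lconst ifF ?mul0r //; lia.
by rewrite /lconst /= mul1r addr0; congr T; lia.
Qed.

Lemma lmul_shiftl d e s S T n :
  lmul (d + s) e (fun m => S (m - s)) T n = lmul d e S T (n - s).
Proof.
rewrite /lmul; have -> : d + s + e - n + 1 = d + e - (n - s) + 1 by lia.
by apply: eq_bigr => k _; congr (S _ * T _); lia.
Qed.

Lemma sum_triangle (F : nat -> nat -> R) N :
  \sum_(k < N) \sum_(a < k.+1) F a (k - a)%N = \sum_(a < N) \sum_(b < N - a) F a b.
Proof.
elim: N => [|N IH]; first by rewrite !big_ord0.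
rewrite big_ord_recr /= IH [in RHS]big_ord_recr /= subSnn big_ord1.
rewrite big_ord_recr /= subnn addrA -big_split; congr (_ + _).
by apply: eq_bigr => a _; rewrite subSn ?big_ord_recr // ltnW.
Qed.

Lemma lmulA d e f S T U n :
  lmul (d + e) f (lmul d e S T) U n = lmul d (e + f) S (lmul e f T U) n.
Proof.
rewrite /lmul; have -> : d + (e + f) - n + 1 = d + e + f - n + 1 by lia.
case: (lerP 0 (d + e + f - n + 1)) => n_le; last first.
  by rewrite !natp_le0 ?big_ord0 //; lia.
have := natpK n_le; set N := natp _ => NE.
pose F (a b : nat) := S (d - a%:Z) * T (e - b%:Z) * U (n - d - e + a%:Z + b%:Z).
transitivity (\sum_(k < N) \sum_(a < k.+1) F a (k - a)%N).
  apply: eq_bigr => k _; rewrite mulr_suml (@natp_eq _ k.+1); last lia.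
  by apply: eq_bigr => a _; have aN := ltn_ord a; congr (S _ * T _ * U _); lia.
rewrite sum_triangle; apply: eq_bigr => a _; have aN := ltn_ord a.
rewrite mulr_sumr (@natp_eq _ (N - a)%N); last lia.
by apply: eq_bigr => b _; rewrite mulrA; congr (S _ * T _ * U _); lia.
Qed.

Lemma lmulAC d e f S T U n :
  lmul (d + e) f (lmul d e S T) U n = lmul (d + f) e (lmul d f S U) T n.
Proof. by rewrite !lmulA [f + e]addrC; apply: eq_lmul => // m; apply: lmulC. Qed.

Lemma lmul_big M d e S T (n : int) : deg_le e T -> (natp (d + e - n + 1) <= M)%N ->
  lmul d e S T n = \sum_(0 <= k < M) S (d - k%:Z) * T (n - d + k%:Z).
Proof.
move=> Te le_M; rewrite lmulE (big_cat_nat (leq0n _) le_M) /= [X in _ = _ + X]big_nat_cond.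
rewrite [X in _ = _ + X]big1 ?addr0 // => k /andP[/andP[k_ge _] _].
by rewrite Te ?mulr0 //; have := natp_ge k_ge; lia.
Qed.

End SeriesProduct.

Section PolyAction.
Variable R : comNzRingType.
Implicit Types (S T : lser R) (a b p : {poly R}) (d e : int).

(* [lpmul a S] is the product [a(z^2) S]: polynomials are in [lambda = z^2]. *)
Definition lpmul a S : lser R :=
  fun n => \sum_(0 <= k < size a) a`_k * S (n - (2 * k)%N%:Z).

Lemma lpmul_big N a S n : (size a <= N)%N ->
  lpmul a S n = \sum_(0 <= k < N) a`_k * S (n - (2 * k)%N%:Z).
Proof.
move=> aN; rewrite /lpmul (big_cat_nat (leq0n _) aN) /= [X in _ + X]big_nat_cond.
by rewrite [X in _ + X]big1 ?addr0 // => k /andP[/andP[ak _] _]; rewrite nth_default ?mul0r.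
Qed.

Lemma eq_lpmul a S T : S =1 T -> lpmul a S =1 lpmul a T.
Proof. by move=> eST n; apply: eq_bigr => k _; rewrite eST. Qed.

Lemma lpmulDl a b S n : lpmul (a + b) S n = lpmul a S n + lpmul b S n.
Proof.
set N := maxn (size a) (size b).
rewrite !(@lpmul_big N) ?leq_maxl ?leq_maxr ?(leq_trans (size_polyD _ _)) //.
by rewrite -big_split; apply: eq_bigr => k _; rewrite coefD mulrDl.
Qed.

Lemma lpmulNl a S n : lpmul (- a) S n = - lpmul a S n.
Proof.
by rewrite /lpmul size_polyN -sumrN; apply: eq_bigr => k _; rewrite coefN mulNr.
Qed.

Lemma lpmul0l S n : lpmul 0 S n = 0.
Proof. by rewrite /lpmul size_poly0 big_geq. Qed.

Lemma lpmulCl c a S n : lpmul (c%:P * a) S n = c * lpmul a S n.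
Proof.
rewrite mul_polyC (@lpmul_big (size a)) ?size_scale_leq //.
by rewrite mulr_sumr; apply: eq_bigr => k _; rewrite coefZ mulrA.
Qed.

Lemma lpmulC c S n : lpmul c%:P S n = c * S n.
Proof.
by rewrite (@lpmul_big 1) ?size_polyC ?leq_b1 // big_nat1 coefC muln0 subr0.
Qed.

Lemma lpmulMX p S n : lpmul (p * 'X) S n = lpmul p S (n - 2).
Proof.
rewrite (@lpmul_big (size p).+1); last first.
  by rewrite (leq_trans (size_polyMleq _ _)) // size_polyX addn2.
rewrite big_nat_recl // coefMX eqxx mul0r add0r.
by apply: eq_bigr => k _; rewrite coefMX /=; congr (_ * S _); lia.
Qed.

Lemma lpmulDr a S T n :
  lpmul a (fun m => S m + T m) n = lpmul a S n + lpmul a T n.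
Proof. by rewrite /lpmul -big_split; apply: eq_bigr => k _; rewrite mulrDr. Qed.

Lemma lpmul0r a n : lpmul a (fun _ => 0) n = 0.
Proof. by rewrite /lpmul big1 // => k _; rewrite mulr0. Qed.

Lemma lpmulA a b S n : lpmul a (lpmul b S) n = lpmul (a * b) S n.
Proof.
elim/poly_ind: a n => [|p c IH] n; first by rewrite mul0r !lpmul0l.
by rewrite mulrDl mulrAC !lpmulDl !lpmulMX lpmulC lpmulCl IH.
Qed.

Lemma lpmulXn m S n : lpmul 'X^m S n = S (n - (2 * m)%N%:Z).
Proof.
elim: m n => [|m IH] n; first by rewrite expr0 lpmulC mul1r subr0.
by rewrite exprSr lpmulMX IH; congr S; lia.
Qed.

Lemma lpmulZXn c m S n : lpmul (c *: 'X^m) S n = c * S (n - (2 * m)%N%:Z).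
Proof. by rewrite -mul_polyC lpmulCl lpmulXn. Qed.

Lemma lpmul_deg d a S : deg_le d S -> deg_le (d + 2 * (size a)%:Z - 2) (lpmul a S).
Proof.
move=> Sd n n_gt; rewrite /lpmul big_nat_cond big1 // => k /andP[/andP[_ ka] _].
by rewrite Sd ?mulr0 //; lia.
Qed.

Lemma lpmul_top k a S n : deg_le 1 S -> (size a <= k.+1)%N -> (2 * k)%N%:Z <= n ->
  lpmul a S n = a`_k * S (n - (2 * k)%N%:Z).
Proof.
move=> S1 ak n_ge; rewrite (lpmul_big _ _ ak) big_nat_recr //= big_nat_cond.
by rewrite big1 ?add0r // => l /andP[/andP[_ lk] _]; rewrite S1 ?mulr0 //; lia.
Qed.

Lemma lpmul_lmul a d e S T : deg_le d S -> deg_le e T ->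
  forall D, deg_le D (lpmul a S) -> lpmul a (lmul d e S T) =1 lmul D e (lpmul a S) T.
Proof.
move=> Sd Te; elim/poly_ind: a => [|p c IH] D aSD n.
  by rewrite lpmul0l (eq_lmul _ _ (fun m => lpmul0l S m) (frefl T)) lmul0l.
have pSd := lpmul_deg (a := p) Sd; set Dp := (d + _ - 2) in pSd.
rewrite lpmulDl lpmulMX lpmulC (IH Dp pSd) -lmul_shiftl -lmulZl.
have cS_deg : deg_le d (fun m => c * S m) by move=> m m_gt; rewrite Sd ?mulr0.
have cS_deg' : deg_le (Dp + 2) (fun m => c * S m) by apply: deg_leW cS_deg; lia.
have aS_deg : deg_le (Dp + 2) (lpmul (p * 'X + c%:P) S).
  move=> m m_gt; rewrite lpmulDl lpmulMX lpmulC pSd ?Sd ?mulr0 ?addr0 //; lia.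
rewrite (lmul_degl _ _ cS_deg cS_deg') -lmulDl (lmul_degl _ _ aSD aS_deg).
apply: eq_lmul => // m.
by rewrite lpmulDl lpmulMX lpmulC.
Qed.

End PolyAction.

Section ABSeries.
Variables (R : comNzRingType) (h : nat -> R).
Implicit Types (S T : lser R) (a b : {poly R}) (d e : int).

Lemma hser_nonneg n : 0 <= n -> hser h n = (n == 1)%:R.
Proof. by case: n => // N _; rewrite /hser; case: ifP. Qed.

Lemma hser_Negz k : hser h (Negz k) = h k.+1.
Proof. by []. Qed.

Lemma hser_deg : deg_le 1 (hser h).
Proof. by move=> n n_gt; rewrite hser_nonneg ?natr_false //; lia. Qed.

Definition abser a b : lser R :=
  fun n => lpmul a (lconst 1) n + lpmul b (hser h) n.

Lemma abserD a a' b b' n : abser (a + a') (b + b') n = abser a b n + abser a' b' n.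
Proof. by rewrite /abser !lpmulDl; ring. Qed.

Lemma abserN a b n : abser (- a) (- b) n = - abser a b n.
Proof. by rewrite /abser !lpmulNl; ring. Qed.

Lemma abserB a a' b b' n : abser (a - a') (b - b') n = abser a b n - abser a' b' n.
Proof. by rewrite abserD abserN. Qed.

Lemma abser0 n : abser 0 0 n = 0.
Proof. by rewrite /abser !lpmul0l addr0. Qed.

Lemma abserCl c a b n : abser (c%:P * a) (c%:P * b) n = c * abser a b n.
Proof. by rewrite /abser !lpmulCl mulrDr. Qed.

Lemma abserMX a b n : abser (a * 'X) (b * 'X) n = abser a b (n - 2).
Proof. by rewrite /abser !lpmulMX. Qed.

Lemma abser_lpmul p a b n : abser (p * a) (p * b) n = lpmul p (abser a b) n.
Proof. by rewrite /abser lpmulDr !lpmulA. Qed.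

Lemma abserC c c' n : abser c%:P c'%:P n = c * lconst 1 n + c' * hser h n.
Proof. by rewrite /abser !lpmulC. Qed.

Lemma abser_top k a b : (size a <= k.+1)%N -> (size b <= k.+1)%N ->
  abser a b (2 * k)%N = a`_k /\ abser a b (2 * k).+1 = b`_k.
Proof.
move=> ak bk; have l1 := deg_leW ler01 (lconst1_deg R).
rewrite /abser !(lpmul_top l1 ak) ?(lpmul_top hser_deg bk); try lia.
have -> : (2 * k).+1%:Z - (2 * k)%N%:Z = 1 by lia.
by rewrite subrr !hser_nonneg // /lconst /= !mulr1 !mulr0 addr0 add0r.
Qed.

Lemma abser_eq0 a b : (forall N : nat, abser a b N = 0) -> a = 0 /\ b = 0.
Proof.
move=> ab0; suff sizes_le B : (size a <= B)%N -> (size b <= B)%N -> a = 0 /\ b = 0.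
  by apply: (sizes_le (maxn (size a) (size b))); rewrite ?leq_maxl ?leq_maxr.
elim: B => [|B IH] aB bB; first by move: aB bB; rewrite !size_poly_leq0 => /eqP-> /eqP->.
have top0 (p : {poly R}) : (size p <= B.+1)%N -> p`_B = 0 -> (size p <= B)%N.
  move=> pB pB0; apply/leq_sizeP => l; rewrite leq_eqVlt => /predU1P[<- //|].
  exact: (leq_sizeP _ _ pB).
have [] := abser_top aB bB; rewrite !ab0 => aB0 bB0.
by apply: IH; apply: top0.
Qed.

Lemma abser_inj a a' b b' :
  (forall N : nat, abser a b N = abser a' b' N) -> a = a' /\ b = b'.
Proof.
move=> eqN; have [] := @abser_eq0 (a - a') (b - b').
  by move=> N; rewrite abserB eqN subrr.
by move=> /eqP; rewrite subr_eq0 => /eqP-> /eqP; rewrite subr_eq0 => /eqP->.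
Qed.

(* One step of [dec_aux]: [T] is [1] or [h], monic of degree [e]. *)
Lemma deg_le_peel k m e S T : deg_le e T -> T e = 1 -> k.+1%:Z = e + (2 * m)%N%:Z ->
  deg_le k.+1 S -> deg_le k (fun n => S n - S k.+1 * T (n - (2 * m)%N%:Z)).
Proof.
move=> Te Te1 kE Sk n n_gt; case: (eqVneq n k.+1) => [->|n_ne].
  have -> : k.+1%:Z - (2 * m)%N%:Z = e by lia.
  by rewrite Te1 mulr1 subrr.
by rewrite Sk ?Te ?mulr0 ?subrr //; lia.
Qed.

Lemma decomp_nonneg (d : nat) S : deg_le d S ->
  forall N : nat, S N = abser (dec_aux h d S).1 (dec_aux h d S).2 N.
Proof.
elim: d S => [|k IH] S Sd N /=.
  rewrite /abser lpmulC lpmul0l addr0 /lconst; case: N => [|N]; first by rewrite mulr1.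
  by rewrite mulr0 Sd //; lia.
have := odd_double_half k.+1; rewrite /= -muln2; set m := uphalf k => km.
case: ifP km => k_odd km; rewrite /abser /= lpmulDl lpmulZXn.
  have km' : k.+1%:Z = 1 + (2 * m)%N%:Z by move: km => /= km; lia.
  have peel := deg_le_peel hser_deg (erefl : hser h 1 = 1) km' Sd.
  by have := IH _ peel N; rewrite /abser => /(canRL (subrK _))->; rewrite addrA.
have km' : k.+1%:Z = 0 + (2 * m)%N%:Z by move: km => /= km; lia.
have peel := deg_le_peel (lconst1_deg R) (erefl : lconst (1 : R) 0 = 1) km' Sd.
by have := IH _ peel N; rewrite /abser => /(canRL (subrK _))->; rewrite addrAC.
Qed.

Lemma lmul_abser a b U T u t : abser a b =1 U -> deg_le u U -> deg_le t T ->
  forall n, lpmul a T n + lpmul b (lmul 1 t (hser h) T) n = lmul u t U T n.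
Proof.
move=> abU Uu Tt n; set D := 2 * (size a)%:Z + 2 * (size b)%:Z.
have a_deg : deg_le D (lpmul a (lconst 1)).
  by apply: deg_leW (lpmul_deg (a := a) (lconst1_deg R)); lia.
have b_deg : deg_le D (lpmul b (hser h)).
  by apply: deg_leW (lpmul_deg (a := b) hser_deg); lia.
rewrite (eq_lpmul _ (fun m => esym (lmul1l Tt m))).
rewrite (lpmul_lmul (lconst1_deg R) Tt a_deg) (lpmul_lmul hser_deg Tt b_deg).
have U_deg : deg_le D U by move=> m m_gt; rewrite -abU /abser a_deg ?b_deg ?addr0.
by rewrite -lmulDl (lmul_degl _ _ Uu U_deg); apply: eq_lmul.
Qed.

Definition is_abser S := exists a b, S =1 abser a b.

Lemma is_abser_ext S T : S =1 T -> is_abser T -> is_abser S.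
Proof. by move=> eST [a [b Tab]]; exists a, b => n; rewrite eST. Qed.

Lemma is_abserD S T : is_abser S -> is_abser T -> is_abser (fun n => S n + T n).
Proof.
by move=> [a [b Sab]] [a' [b' Tab]]; exists (a + a'), (b + b') => n; rewrite abserD Sab Tab.
Qed.

Lemma is_abserN S : is_abser S -> is_abser (fun n => - S n).
Proof. by move=> [a [b Sab]]; exists (- a), (- b) => n; rewrite abserN Sab. Qed.

Lemma is_abserZ c S : is_abser S -> is_abser (fun n => c * S n).
Proof. by move=> [a [b Sab]]; exists (c%:P * a), (c%:P * b) => n; rewrite abserCl Sab. Qed.

Lemma is_abser_shift2 S : is_abser S -> is_abser (fun n => S (n - 2)).
Proof. by move=> [a [b Sab]]; exists (a * 'X), (b * 'X) => n; rewrite abserMX Sab. Qed.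

Lemma is_abser_lconst c : is_abser (lconst c).
Proof.
by exists c%:P, 0 => n; rewrite abserC mul0r addr0 /lconst; case: ifP; rewrite ?mulr1 ?mulr0.
Qed.

Lemma is_abser_hser : is_abser (hser h).
Proof. by exists 0, 1 => n; rewrite -polyC0 -polyC1 abserC mul0r add0r mul1r. Qed.

Lemma is_abser_sum (r : seq nat) (F : nat -> lser R) : (forall l, is_abser (F l)) ->
  is_abser (fun n => \sum_(l <- r) F l n).
Proof.
move=> F_ab; elim: r => [|l r IH].
  by apply: is_abser_ext (is_abser_lconst 0) => n; rewrite big_nil /lconst if_same.
by apply: is_abser_ext (is_abserD (F_ab l) IH) => n; rewrite big_cons.
Qed.

Lemma abser_decomp (d : nat) S : deg_le d S -> is_abser S ->
  S =1 abser (dec_aux h d S).1 (dec_aux h d S).2.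
Proof.
move=> Sd [a [b Sab]].
have [<- <-] : a = (dec_aux h d S).1 /\ b = (dec_aux h d S).2.
  by apply: abser_inj => N; rewrite -Sab -decomp_nonneg.
exact: Sab.
Qed.

End ABSeries.

Section HSeries.
Variables (R : comNzRingType) (h : nat -> R).
Implicit Types (T : lser R).

Lemma Hser_ind (P : nat -> Prop) : P 0%N -> P 1%N -> P 2%N ->
  (forall k, P k.+1 -> P k.+3) -> forall k, P k.
Proof.
move=> P0 P1 P2 PS k; suff : [/\ P k, P k.+1 & P k.+2] by case.
by elim: k => [|k [_ IH1 IH2]]; split => //; apply: PS.
Qed.

Lemma Hser0 : Hser h 0 = lconst 1.
Proof. by []. Qed.

Lemma Hser1 : Hser h 1 = hser h.
Proof. by []. Qed.

Lemma Hser2 : Hser h 2 = Defs.lshift 2 (lconst 1).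
Proof. by []. Qed.

Lemma HserSSS k : Hser h k.+3 = Hstep h (Hser h k.+1).
Proof. by []. Qed.

Lemma Hser_nonneg k (N : nat) : Hser h k N = (N == k)%:R.
Proof.
elim/Hser_ind: k N => [[|N]|N|[|[|[|N]]]|k IH N] //.
  by rewrite Hser1 hser_nonneg.
rewrite HserSSS /Hstep hser_nonneg // /lconst; case: N => [|[|N]] /=.
- by rewrite mulr0 mulr1 subr0 subrr.
- by rewrite mulr1 mulr0 subr0 subrr.
by rewrite !mulr0 !subr0 (_ : N.+2%:Z - 2 = N) ?IH //; lia.
Qed.

Lemma Hser_deg (k : nat) : deg_le k (Hser h k).
Proof.
by apply: deg_le_nat => N kN; rewrite Hser_nonneg natr_false //; lia.
Qed.

Lemma is_abser_Hser k : is_abser h (Hser h k).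
Proof.
elim/Hser_ind: k => [|||k IH].
- exact: is_abser_lconst.
- exact: is_abser_hser.
- exact/is_abser_shift2/is_abser_lconst.
rewrite HserSSS /Hstep.
apply/is_abserD/is_abserN/is_abserZ/is_abser_lconst.
exact/is_abserD/is_abserN/is_abserZ/is_abser_hser/is_abser_shift2.
Qed.

Lemma is_abser_Sser j : is_abser h (Sser h j).
Proof.
apply/is_abserD/is_abserZ/is_abser_lconst.
by apply/is_abserD/is_abser_sum => [|l]; [apply: is_abser_Hser | apply/is_abserZ/is_abser_Hser].
Qed.

Lemma Sser_deg j : deg_le j.+1 (Sser h j).
Proof.
apply: deg_le_nat => N jN; rewrite /Sser Hser_nonneg /lconst natr_false ?add0r; last lia.
rewrite ifF ?mulr0 ?addr0; last lia.
rewrite big_nat_cond big1 // => l /andP[/andP[_ lj] _].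
by rewrite Hser_nonneg natr_false ?mulr0 //; lia.
Qed.

Lemma lmul_hser_nonneg (t : nat) T (N : nat) : deg_le t T ->
  lmul 1 t (hser h) T N = T (N%:Z - 1) + \sum_(1 <= l < t.+1) h l * T (N + l)%N.
Proof.
move=> Tt; rewrite (lmul_big (M := t.+2)) // ?natp_le //; last lia.
rewrite big_ltn // big_ltn // big_add1 /= !hser_nonneg // mul1r mul0r add0r addr0.
congr (_ + _); apply: eq_big_nat => l /andP[l_gt0 _].
rewrite (_ : 1 - l.+1%:Z = Negz l.-1) ?hser_Negz ?prednK //; last lia.
by congr (_ * T _); lia.
Qed.

Lemma hser_Hser_nonneg (j N : nat) : lmul 1 j (hser h) (Hser h j) N = Sser h j N.
Proof.
rewrite (lmul_hser_nonneg _ (@Hser_deg j)) /Sser addrAC; congr (_ + _); last first.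
  apply: eq_big_nat => l /andP[_ lj]; rewrite !Hser_nonneg.
  rewrite (_ : ((N + l)%N == j) = (N == (j - l)%N)) //.
  by apply/eqP/eqP; lia.
case: N => [|N]; first by rewrite Hser_nonneg /lconst /Hc sub0r mulr1 add0r.
by rewrite /lconst mulr0 addr0 (_ : N.+1%:Z - 1 = N) ?Hser_nonneg //; lia.
Qed.

Lemma flow_nonneg j (N : nat) : flow h j N = 0.
Proof. by rewrite /flow hser_Hser_nonneg addNr. Qed.

Lemma flow_deg j d : -1 <= d -> deg_le d (flow h j).
Proof.
move=> d_ge n n_gt; have [N ->] : exists N : nat, n = N by apply: int_of_nonneg; lia.
exact: flow_nonneg.
Qed.

Lemma Sser_flow (j : nat) n : Sser h j n = lmul 1 j (hser h) (Hser h j) n + flow h j n.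
Proof. by rewrite /flow addNKr. Qed.

Lemma Sser_shift (j t N : nat) : (0 < N)%N -> Sser h (j + t) (N + t)%N = Sser h j N.
Proof.
move=> N_gt0; rewrite /Sser !Hser_nonneg /lconst !ifF ?mulr0 ?addr0; try lia.
rewrite (_ : (N + t == (j + t).+1)%N = (N == j.+1)); last by apply/eqP/eqP; lia.
congr (_ + _); rewrite (@big_cat_nat _ _ _ j.+1) //=; last lia.
rewrite [X in _ + X]big_nat_cond [X in _ + X]big1 ?addr0 => [|l /andP[/andP[jl _] _]].
  apply: eq_big_nat => l /andP[_ lj]; rewrite !Hser_nonneg.
  by rewrite (_ : (N + t == j + t - l)%N = (N == j - l)%N) //; apply/eqP/eqP; lia.
by rewrite Hser_nonneg natr_false ?mulr0 //; lia.
Qed.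

End HSeries.

Lemma ord2_cases (r : 'I_2) : r = 0 \/ r = 1.
Proof. by case: r => [[|[|r]] r_lt] //; [left | right]; apply: val_inj. Qed.

Section Rows.
Variables (R : comNzRingType) (h : nat -> R).
Implicit Types (P Q : 'M[{poly R}]_2).

Definition rowser P (r : 'I_2) : lser R := abser h (P r 0) (P r 1).

Lemma rowser_Vmx0 j : rowser (Vmx h j) 0 =1 Hser h j.
Proof.
by move=> n; rewrite /rowser !mxE /= -(abser_decomp (@Hser_deg _ h j) (is_abser_Hser h j)).
Qed.

Lemma rowser_Vmx1 j : rowser (Vmx h j) 1 =1 Sser h j.
Proof.
by move=> n; rewrite /rowser !mxE /= -(abser_decomp (@Sser_deg _ h j) (is_abser_Sser h j)).
Qed.

Lemma rowserD P Q r n : rowser (P + Q) r n = rowser P r n + rowser Q r n.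
Proof. by rewrite /rowser !mxE abserD. Qed.

Lemma rowserN P r n : rowser (- P) r n = - rowser P r n.
Proof. by rewrite /rowser !mxE abserN. Qed.

Lemma rowserB P Q r n : rowser (P - Q) r n = rowser P r n - rowser Q r n.
Proof. by rewrite rowserD rowserN. Qed.

Lemma rowser_mulmx P Q r n :
  rowser (P *m Q) r n = lpmul (P r 0) (rowser Q 0) n + lpmul (P r 1) (rowser Q 1) n.
Proof.
rewrite /rowser !mxE !big_ord_recl !big_ord0 !addr0 abserD !abser_lpmul.
by rewrite (_ : lift ord0 ord0 = 1 :> 'I_2) //; apply: val_inj.
Qed.

Lemma rowser0 r n : rowser 0 r n = 0.
Proof. by rewrite /rowser !mxE abser0. Qed.

Lemma rowser_inj P Q : (forall r (N : nat), rowser P r N = rowser Q r N) -> P = Q.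
Proof.
move=> PQ; apply/matrixP => r s; have [e0 e1] := abser_inj (PQ r).
by case: (ord2_cases s) => ->.
Qed.

End Rows.

Section Naturality.
Variables (R R' : comNzRingType) (f : {rmorphism R -> R'}).
Variables (h : nat -> R) (h' : nat -> R').
Hypothesis h'E : forall l, h' l = f (h l).

Lemma hser_map n : hser h' n = f (hser h n).
Proof.
rewrite /hser; case: ifP => _; first by rewrite rmorph1.
by case: n => [n|k]; rewrite ?rmorph0 ?h'E.
Qed.

Lemma lconst_map c n : lconst (f c) n = f (lconst c n).
Proof. by rewrite /lconst; case: ifP; rewrite ?rmorph0. Qed.

Lemma lconst1_map n : lconst 1 n = f (lconst 1 n).
Proof. by rewrite -lconst_map rmorph1. Qed.

Lemma Hser_map k n : Hser h' k n = f (Hser h k n).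
Proof.
elim/Hser_ind: k n => [|||k IH] n.
- by rewrite !Hser0 lconst1_map.
- by rewrite !Hser1 hser_map.
- by rewrite !Hser2 /Defs.lshift lconst1_map.
by rewrite !HserSSS /Hstep !IH !hser_map lconst1_map -!rmorphM -!rmorphB.
Qed.

Lemma Sser_map j n : Sser h' j n = f (Sser h j n).
Proof.
rewrite /Sser /Hc !rmorphD rmorph_sum rmorphM !Hser_map lconst1_map.
by congr (_ + _ + _); apply: eq_bigr => l _; rewrite rmorphM Hser_map h'E.
Qed.

Lemma map_polyZXn (c : R) m : map_poly f (c *: 'X^m) = f c *: 'X^m.
Proof. by apply/polyP => l; rewrite coef_map /= !coefZ !coefXn rmorphM rmorph_nat. Qed.

Lemma dec_aux_map k S S' : (forall n, S' n = f (S n)) ->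
  dec_aux h' k S' = (map_poly f (dec_aux h k S).1, map_poly f (dec_aux h k S).2).
Proof.
elim: k S S' => [|k IH] S S' S'E /=; first by rewrite S'E map_polyC map_poly0.
set m := uphalf k; case: ifP => _.
  rewrite (IH (fun n => S n - S k.+1 * hser h (n - (2 * m)%N%:Z))) => [|n].
    by rewrite /= (raddfD (map_poly f)) S'E; congr (_, _ + _); exact: (esym (map_polyZXn _ _)).
  by rewrite rmorphB rmorphM !S'E hser_map.
rewrite (IH (fun n => S n - S k.+1 * lconst 1 (n - (2 * m)%N%:Z))) => [|n].
  by rewrite /= (raddfD (map_poly f)) S'E; congr (_ + _, _); exact: (esym (map_polyZXn _ _)).
by rewrite rmorphB rmorphM !S'E -lconst1_map.
Qed.

Lemma Vmx_map j : map_mx (map_poly f) (Vmx h j) = Vmx h' j.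
Proof.
apply/matrixP => r s; rewrite !mxE /decomp (dec_aux_map _ (Hser_map j)).
by rewrite (dec_aux_map _ (Sser_map j)); case: ifP; case: ifP.
Qed.

End Naturality.

Section Tangent.
Variable R : comNzRingType.
Implicit Types (S T : lser {poly R}) (p q : {poly R}).

Definition lcoef (i : nat) S : lser R := fun n => (S n)`_i.

Lemma coef1M p q : (p * q)`_1 = p`_0 * q`_1 + p`_1 * q`_0.
Proof. by rewrite coefM !big_ord_recl big_ord0 addr0. Qed.

Lemma lcoef1_lmul d e S T n :
  lcoef 1 (lmul d e S T) n
  = lmul d e (lcoef 0 S) (lcoef 1 T) n + lmul d e (lcoef 1 S) (lcoef 0 T) n.
Proof. by rewrite /lcoef /lmul coef_sum -big_split; apply: eq_bigr => k _; rewrite coef1M. Qed.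

Lemma lcoef1_lpmul (b : {poly {poly R}}) S n :
  lcoef 1 (lpmul b S) n = lpmul (map_poly (coefp 1) b) (lcoef 0 S) n
                        + lpmul (map_poly (coefp 0) b) (lcoef 1 S) n.
Proof.
rewrite !(lpmul_big (N := size b)) ?size_poly // /lcoef coef_sum -big_split.
by apply: eq_bigr => k _; rewrite coef1M !coef_map addrC.
Qed.

Variables (h w : nat -> R).
Let ht := dualseq h w.

Lemma dualseq_coef0 l : h l = coefp 0 (ht l).
Proof. by rewrite /= /ht /dualseq coefD coefC coefMX addr0. Qed.

Lemma lcoef0_hser : lcoef 0 (hser ht) =1 hser h.
Proof. by move=> n; rewrite /lcoef (hser_map (f := coefp 0) dualseq_coef0). Qed.

Lemma lcoef0_Hser k : lcoef 0 (Hser ht k) =1 Hser h k.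
Proof. by move=> n; rewrite /lcoef (Hser_map (f := coefp 0) dualseq_coef0). Qed.

Lemma lcoef1_abser a b n :
  lcoef 1 (abser ht a b) n = abser h (map_poly (coefp 1) a) (map_poly (coefp 1) b) n
                           + lpmul (map_poly (coefp 0) b) (lcoef 1 (hser ht)) n.
Proof.
have lconst1_coef i : lcoef i (lconst 1) =1 lconst (i == 0)%:R.
  by move=> m; rewrite /lcoef /lconst; case: ifP; rewrite ?coef1 ?coef0.
transitivity (lcoef 1 (lpmul a (lconst 1)) n + lcoef 1 (lpmul b (hser ht)) n).
  by rewrite /lcoef /abser coefD.
rewrite !lcoef1_lpmul !(eq_lpmul _ (lconst1_coef _)) (eq_lpmul _ lcoef0_hser) /=.
rewrite (@eq_lpmul _ _ (lconst 0) (fun _ => 0)) => [|m]; last by rewrite /lconst if_same.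
by rewrite lpmul0r addr0 addrA.
Qed.

Lemma rowser_dVmx J r n :
  rowser h (dVmx h w J) r n + lpmul (Vmx h J r 1) (lcoef 1 (hser ht)) n
  = lcoef 1 (rowser ht (Vmx ht J) r) n.
Proof.
by rewrite /rowser lcoef1_abser -(Vmx_map (f := coefp 0) dualseq_coef0) /dVmx !mxE.
Qed.

End Tangent.

Section Lax.
Variables (R : comNzRingType) (h : nat -> R) (j J : nat).
Hypothesis stationary : forall n, flow h J n = 0.

Let ht := dualseq h (flowv h j).
Let X := Vmx h J.
Let V := Vmx h j.
Let H := Hser h J.
Let dH := lcoef 1 (Hser ht J).

Lemma lcoef1_hser_flow : lcoef 1 (hser ht) =1 flow h j.
Proof.
case=> [N|k]; first by rewrite /lcoef hser_nonneg // coefMn coef1 mul0rn flow_nonneg.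
by rewrite /lcoef hser_Negz /ht /dualseq coefD coefC coefMX /= coefC add0r /flowv NegzE.
Qed.

Lemma rowser_stationary : rowser h X 1 =1 lmul 1 J (hser h) H.
Proof. by move=> n; rewrite rowser_Vmx1 Sser_flow stationary addr0. Qed.

Lemma dVmx_row0 n : rowser h (dVmx h (flowv h j) J) 0 n + lpmul (X 0 1) (flow h j) n = dH n.
Proof.
rewrite -(eq_lpmul _ lcoef1_hser_flow) rowser_dVmx.
by rewrite /dH /lcoef (rowser_Vmx0 _ _ n).
Qed.

Lemma dVmx_row1 n : rowser h (dVmx h (flowv h j) J) 1 n + lpmul (X 1 1) (flow h j) n
  = lmul 1 J (hser h) dH n + lmul 1 J (flow h j) H n + lcoef 1 (flow ht J) n.
Proof.
rewrite -(eq_lpmul _ lcoef1_hser_flow) rowser_dVmx /lcoef (rowser_Vmx1 _ _ n) Sser_flow.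
rewrite coefD -!/(lcoef 1 _ _) lcoef1_lmul (eq_lmul _ _ (lcoef0_hser _ _) (frefl _)).
by rewrite (eq_lmul _ _ lcoef1_hser_flow (lcoef0_Hser _ _ J)).
Qed.

Lemma rowser_comm0 n : rowser h (mcomm V X) 0 n = - lpmul (X 0 1) (flow h j) n.
Proof.
rewrite /mcomm rowserB !rowser_mulmx (eq_lpmul _ (rowser_Vmx0 h J)).
rewrite (eq_lpmul _ rowser_stationary).
rewrite (lmul_abser (rowser_Vmx0 h j) (@Hser_deg _ h j) (@Hser_deg _ h J)).
rewrite (eq_lpmul _ (rowser_Vmx0 h j)) (eq_lpmul _ (rowser_Vmx1 h j)).
rewrite (eq_lpmul _ (Sser_flow h j)) lpmulDr addrA.
rewrite (lmul_abser (rowser_Vmx0 h J) (@Hser_deg _ h J) (@Hser_deg _ h j)).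
by rewrite lmulC; ring.
Qed.

Lemma rowser_comm1 n :
  rowser h (mcomm V X) 1 n = lmul 1 J (flow h j) H n - lpmul (X 1 1) (flow h j) n.
Proof.
rewrite /mcomm rowserB !rowser_mulmx (eq_lpmul _ (rowser_Vmx0 h J)).
rewrite (eq_lpmul _ rowser_stationary).
rewrite (lmul_abser (rowser_Vmx1 h j) (@Sser_deg _ h j) (@Hser_deg _ h J)).
rewrite (eq_lpmul _ (rowser_Vmx0 h j)) (eq_lpmul _ (rowser_Vmx1 h j)).
rewrite (eq_lpmul _ (Sser_flow h j)) lpmulDr addrA.
rewrite (lmul_abser rowser_stationary (@lmul_deg _ 1 J (hser h) H) (@Hser_deg _ h j)).
rewrite (eq_lmul _ _ (Sser_flow h j) (frefl _)) lmulDl (_ : j.+1%:Z = 1 + j%:Z) // lmulAC.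
by rewrite (lmul_degl _ _ (@flow_deg _ h j (1 + j%:Z) _) (@flow_deg _ h j 1 _)) //; ring.
Qed.

Lemma Vmx_lax : mcomm V X = dVmx h (flowv h j) J.
Proof.
set M := dVmx h (flowv h j) J - mcomm V X.
have M0 : rowser h M 0 =1 dH by move=> n; rewrite rowserB rowser_comm0 opprK dVmx_row0.
have [M00 M01] : M 0 0 = 0 /\ M 0 1 = 0.
  apply: (@abser_eq0 _ h) => N; rewrite -[abser _ _ _ _]/(rowser h M 0 N) M0.
  by rewrite /dH /lcoef Hser_nonneg coefMn coef1 mul0rn.
have dH0 : dH =1 (fun _ => 0) by move=> n; rewrite -M0 /rowser M00 M01 abser0.
have M1 : rowser h M 1 =1 lcoef 1 (flow ht J).
  move=> n; rewrite rowserB rowser_comm1 opprB addrA dVmx_row1.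
  by rewrite (eq_lmul _ _ (frefl _) dH0) lmulC lmul0l add0r addrAC subrr add0r.
have M_0 : M = 0.
  apply: (@rowser_inj _ h) => r N; rewrite rowser0; case: (ord2_cases r) => ->.
    by rewrite M0 dH0.
  by rewrite M1 /lcoef flow_nonneg coef0.
by apply/eqP; rewrite eq_sym -subr_eq0 -/M M_0.
Qed.

End Lax.

Section PlusPart.
Variables (R : comNzRingType) (h : nat -> R).

Lemma abser_drop_poly G a b (N : nat) :
  abser h (drop_poly G a) (drop_poly G b) N = abser h a b (N + 2 * G)%N.
Proof.
have take0 : abser h (take_poly G a) (take_poly G b) (N + 2 * G)%N = 0.
  have [ta tb] := (size_take_poly G a, size_take_poly G b).
  by rewrite /abser (lpmul_deg (lconst1_deg R)) ?(lpmul_deg (hser_deg h)) ?addr0 //; lia.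
rewrite -{2}(poly_take_drop G a) -{2}(poly_take_drop G b) abserD take0 add0r.
by rewrite ![_ * 'X^G]mulrC abser_lpmul lpmulXn; congr abser; lia.
Qed.

Lemma rowser_pluspart G X r (N : nat) :
  rowser h (pluspart G X) r N = rowser h X r (N + 2 * G)%N.
Proof. by rewrite /rowser !mxE abser_drop_poly. Qed.

(* The shift by [lambda^G] matches [V^(j)] except for the constant term of the
   second row, which is absorbed by [A]. *)
Lemma pluspart_Vmx j G :
  exists c : R, pluspart G (Vmx h (j + 2 * G)) = Vmx h j + c%:P *: Amx R.
Proof.
exists (Sser h (j + 2 * G) (2 * G)%N - Sser h j 0).
apply: (@rowser_inj _ h) => r N; rewrite rowserD rowser_pluspart.
case: (ord2_cases r) => ->.
  rewrite !rowser_Vmx0 !Hser_nonneg /rowser !mxE /= mulr0 abser0 addr0.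
  by rewrite (_ : (N + 2 * G == j + 2 * G)%N = (N == j)) //; apply/eqP/eqP; lia.
rewrite !rowser_Vmx1 /rowser !mxE /= mulr1 mulr0 -polyC0 abserC mul0r addr0 /lconst.
case: N => [|N]; first by rewrite add0n mulr1 addrC subrK.
by rewrite mulr0 addr0 Sser_shift.
Qed.

End PlusPart.

Unset Implicit Arguments.

Theorem mainTheorem6 (R : numClosedFieldType) (g : nat) (hg : (1 <= g)%N)
  (i : nat) (hi : (i < g)%N) (h : nat -> R) (hM : inM g h) :
  exists c : R,
    mcomm (pluspart (g - i) (Vmx h (2 * g + 1))) (Vmx h (2 * g + 1)) =
    dVmx h (flowv h (2 * i + 1)) (2 * g + 1)
    + c%:P *: mcomm (Amx R) (Vmx h (2 * g + 1)).
Proof.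
have gE : (2 * g + 1 = 2 * i + 1 + 2 * (g - i))%N by lia.
have [c plusE] := pluspart_Vmx h (2 * i + 1) (g - i).
exists c; rewrite -(@Vmx_lax _ h (2 * i + 1) _ hM) gE plusE /mcomm.
by rewrite mulmxDl mulmxDr -scalemxAl -scalemxAr scalerBr opprD addrACA.
Qed.
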